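(* Let $(x(t),p(t))$ be a solution of Hamilton's equations $x_j'=\partial H/\partial p_j$, $p_j'=-\partial H/\partial x_j$ ($1\le j\le n+1$) for $H(x,p)=\tfrac12\sum_{j=1}^{n+1}\xi_j(x)^2p_j^2$ with initial condition $x(0)=x^0$, $p(0)=p^0$. Define $R_{n+1}(t):=|p_{n+1}(t)|$ and recursively $R_j(t):=\sqrt{R_{j+1}(t)^2x_j(t)^{2\alpha_j}+p_j(t)^2}$ for $1\le j\le n$. Then each $R_j^2$ is constant in $t$, with $R_{n+1}^2=(p^0_{n+1})^2$ and $R_j^2=R_{j+1}^2(x^0_j)^{2\alpha_j}+(p^0_j)^2$ for $1\le j\le n$.
   Context: Here $n\ge1$, $\alpha=(\alpha_1,\dots,\alpha_n)\in(\mathbb{N}\cup\{0\})^n$, and $\xi_j(x)=\prod_{i=1}^{j-1}x_i^{\alpha_i}$ for $x\in\mathbb{R}^{n+1}$ (empty product $=1$); this $H$ is the sub-Riemannian Hamiltonian of the Grushin space $\mathbb{G}^{n+1}_\alpha$ generated by $X_j=\xi_j\partial_{x_j}$. *)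

From Stdlib Require Import Reals.
From Coquelicot Require Import Coquelicot.
Open Scope R_scope.

(* Points of R^{n+1} are functions nat -> R; coordinates 1..n+1 are used. *)

Fixpoint prod_upto (f : nat -> R) (k : nat) : R :=
  match k with O => 1 | S k' => prod_upto f k' * f (S k') end.

Fixpoint sum_upto (f : nat -> R) (k : nat) : R :=
  match k with O => 0 | S k' => sum_upto f k' + f (S k') end.

Definition xi (alpha : nat -> nat) (x : nat -> R) (j : nat) : R :=
  prod_upto (fun i => x i ^ alpha i) (j - 1).

Definition Ham (n : nat) (alpha : nat -> nat) (x p : nat -> R) : R :=
  / 2 * sum_upto (fun j => (xi alpha x j) ^ 2 * (p j) ^ 2) (n + 1).

Definition upd (v : nat -> R) (j : nat) (s : R) : nat -> R :=
  fun i => if Nat.eqb i j then s else v i.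

Definition is_hamilton_solution (n : nat) (alpha : nat -> nat) (a b : R)
  (x p : R -> nat -> R) : Prop :=
  forall t, a < t < b -> forall j, (1 <= j <= n + 1)%nat ->
    is_derive (fun s => x s j) t
      (Derive (fun q => Ham n alpha (x t) (upd (p t) j q)) (p t j)) /\
    is_derive (fun s => p s j) t
      (- Derive (fun q => Ham n alpha (upd (x t) j q) (p t)) (x t j)).

(* Rk k t : R_{n+1-k}(t); Rk 0 = |p_{n+1}|,
   Rk (k+1) = sqrt(Rk k ^2 * x_{n-k}^{2 alpha_{n-k}} + p_{n-k}^2) *)
Fixpoint Rk (n : nat) (alpha : nat -> nat) (x p : R -> nat -> R) (k : nat) (t : R) : R :=
  match k with
  | O => Rabs (p t (n + 1)%nat)
  | S k' => sqrt ((Rk n alpha x p k' t) ^ 2 * (x t (n - k')%nat) ^ (2 * alpha (n - k')%nat)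
                  + (p t (n - k')%nat) ^ 2)
  end.

Definition Rj (n : nat) (alpha : nat -> nat) (x p : R -> nat -> R) (j : nat) (t : R) : R :=
  Rk n alpha x p (n + 1 - j) t.

(** The Hamiltonian splits as
    [2 H = sum_{i<j} xi_i^2 p_i^2 + xi_j^2 R_j^2]
    where [xi_i] only involves [x_1 .. x_{i-1}] and [R_j^2] only involves the
    coordinates of index at least [j], with [p_j] entering [R_j^2] only through
    the summand [p_j^2].  Hence [x_j' = xi_j^2 p_j] and
    [p_j' = -1/2 xi_j^2 R_{j+1}^2 d/dx_j (x_j^(2 alpha_j))].  Going down from
    [j = n+1], where [p_{n+1}' = 0], once [R_{j+1}^2] is known to be a constant
    [c], the pair [(x_j, p_j)] conserves the energy [c x_j^(2 alpha_j) + p_j^2],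
    which is [R_j^2]. *)
From Stdlib Require Import Reals Lra Lia.
From Coquelicot Require Import Coquelicot.
Open Scope R_scope.

(* [Rsq n alpha X P k] is [R_{n+1-k}^2] at the phase point [(X, P)]; unlike
   [Rk] it contains no square root. *)
Fixpoint Rsq (n : nat) (alpha : nat -> nat) (X P : nat -> R) (k : nat) : R :=
  match k with
  | O => P (n + 1)%nat ^ 2
  | S k' => Rsq n alpha X P k' * X (n - k')%nat ^ (2 * alpha (n - k')%nat)
            + P (n - k')%nat ^ 2
  end.

Lemma pow_even_ge0 (y : R) (m : nat) : 0 <= y ^ (2 * m).
Proof. rewrite pow_mult. apply pow_le. nra. Qed.

Lemma Rk_sqr n alpha x p k t : Rk n alpha x p k t ^ 2 = Rsq n alpha (x t) (p t) k.
Proof.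
  induction k as [|k IH]; cbn [Rk Rsq].
  - apply pow2_abs.
  - rewrite pow2_sqrt, IH; [reflexivity|].
    pose proof (pow_even_ge0 (x t (n - k)%nat) (alpha (n - k)%nat)).
    pose proof (pow2_ge_0 (Rk n alpha x p k t)).
    pose proof (pow2_ge_0 (p t (n - k)%nat)).
    nra.
Qed.

Lemma prod_upto_ext f g m : (forall i, (1 <= i <= m)%nat -> f i = g i) ->
  prod_upto f m = prod_upto g m.
Proof.
  induction m as [|m IH]; intros H; simpl; [reflexivity|].
  rewrite IH, H; [reflexivity | lia | intros i Hi; apply H; lia].
Qed.

Lemma sum_upto_ext f g m : (forall i, (1 <= i <= m)%nat -> f i = g i) ->
  sum_upto f m = sum_upto g m.
Proof.
  induction m as [|m IH]; intros H; simpl; [reflexivity|].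
  rewrite IH, H; [reflexivity | lia | intros i Hi; apply H; lia].
Qed.

Lemma xi_ext alpha X X' j : (forall i, (i < j)%nat -> X i = X' i) ->
  xi alpha X j = xi alpha X' j.
Proof.
  intros H. apply prod_upto_ext. intros i Hi. rewrite H by lia. reflexivity.
Qed.

Lemma xi_SS alpha X j : xi alpha X (S (S j)) = xi alpha X (S j) * X (S j) ^ alpha (S j).
Proof. unfold xi. rewrite !Nat.sub_succ, !Nat.sub_0_r. reflexivity. Qed.

Lemma Rsq_ext n alpha X P X' P' k :
  (forall i, (n + 1 - k <= i)%nat -> X i = X' i /\ P i = P' i) ->
  Rsq n alpha X P k = Rsq n alpha X' P' k.
Proof.
  induction k as [|k IH]; intros H; cbn [Rsq].
  - destruct (H (n + 1)%nat) as [_ ->]; [lia | reflexivity].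
  - rewrite IH by (intros; apply H; lia).
    destruct (H (n - k)%nat) as [-> ->]; [lia | reflexivity].
Qed.

Lemma Ham_split n alpha X P k : (k <= n)%nat ->
  2 * Ham n alpha X P = sum_upto (fun i => xi alpha X i ^ 2 * P i ^ 2) (n - k)
                        + xi alpha X (n + 1 - k) ^ 2 * Rsq n alpha X P k.
Proof.
  induction k as [|k IH]; intros Hk.
  - unfold Ham. cbn [Rsq]. rewrite Nat.sub_0_r, !Nat.add_1_r. simpl. field.
  - rewrite IH by lia.
    set (m := (n - S k)%nat).
    replace (n - k)%nat with (S m) by lia.
    replace (n + 1 - k)%nat with (S (S m)) by lia.
    replace (n + 1 - S k)%nat with (S m) by lia.
    cbn [sum_upto Rsq]. replace (n - k)%nat with (S m) by lia.
    rewrite xi_SS, Nat.mul_comm, pow_mult. ring.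
Qed.

Lemma Ham_split_at n alpha X P j : (1 <= j <= n + 1)%nat ->
  2 * Ham n alpha X P = sum_upto (fun i => xi alpha X i ^ 2 * P i ^ 2) (j - 1)
                        + xi alpha X j ^ 2 * Rsq n alpha X P (n + 1 - j).
Proof.
  intros Hj. rewrite (Ham_split n alpha X P (n + 1 - j)) by lia.
  replace (n - (n + 1 - j))%nat with (j - 1)%nat by lia.
  replace (n + 1 - (n + 1 - j))%nat with j by lia. reflexivity.
Qed.

Lemma upd_eq v j s : upd v j s j = s.
Proof. unfold upd. now rewrite Nat.eqb_refl. Qed.

Lemma upd_neq v j s i : i <> j -> upd v j s i = v i.
Proof. intros H. unfold upd. now rewrite (proj2 (Nat.eqb_neq i j) H). Qed.

Lemma Rsq_upd_p n alpha X P j q : (1 <= j <= n + 1)%nat ->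
  Rsq n alpha X (upd P j q) (n + 1 - j) = Rsq n alpha X P (n + 1 - j) - P j ^ 2 + q ^ 2.
Proof.
  intros Hj. destruct (n + 1 - j)%nat as [|k] eqn:Hk; cbn [Rsq].
  - replace (n + 1)%nat with j by lia. rewrite upd_eq. ring.
  - replace (n - k)%nat with j by lia. rewrite upd_eq.
    rewrite (Rsq_ext n alpha X (upd P j q) X P);
      [ring | intros i Hi; rewrite upd_neq by lia; auto].
Qed.

Lemma Rsq_upd_x n alpha X P j q : (1 <= j <= n)%nat ->
  Rsq n alpha (upd X j q) P (n + 1 - j)
  = Rsq n alpha X P (n - j) * q ^ (2 * alpha j) + P j ^ 2.
Proof.
  intros Hj. replace (n + 1 - j)%nat with (S (n - j)) by lia. cbn [Rsq].
  replace (n - (n - j))%nat with j by lia. rewrite upd_eq.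
  rewrite (Rsq_ext n alpha (upd X j q) P X P);
    [reflexivity | intros i Hi; rewrite upd_neq by lia; auto].
Qed.

Lemma Ham_upd_p n alpha X P j q : (1 <= j <= n + 1)%nat ->
  Ham n alpha X (upd P j q)
  = / 2 * (sum_upto (fun i => xi alpha X i ^ 2 * P i ^ 2) (j - 1)
           + xi alpha X j ^ 2 * (Rsq n alpha X P (n + 1 - j) - P j ^ 2 + q ^ 2)).
Proof.
  intros Hj. rewrite <- Rsq_upd_p by exact Hj.
  rewrite (sum_upto_ext (fun i => xi alpha X i ^ 2 * P i ^ 2)
             (fun i => xi alpha X i ^ 2 * upd P j q i ^ 2))
    by (intros i Hi; rewrite upd_neq by lia; reflexivity).
  rewrite <- Ham_split_at by exact Hj. field.
Qed.

Lemma Ham_upd_x n alpha X P j q : (1 <= j <= n)%nat ->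
  Ham n alpha (upd X j q) P
  = / 2 * (sum_upto (fun i => xi alpha X i ^ 2 * P i ^ 2) (j - 1)
           + xi alpha X j ^ 2 * (Rsq n alpha X P (n - j) * q ^ (2 * alpha j) + P j ^ 2)).
Proof.
  intros Hj.
  assert (Hxi : forall i, (i <= j)%nat -> xi alpha (upd X j q) i = xi alpha X i).
  { intros i Hi. apply xi_ext. intros i' Hi'. apply upd_neq. lia. }
  rewrite <- Rsq_upd_x, <- (Hxi j) by lia.
  rewrite (sum_upto_ext (fun i => xi alpha X i ^ 2 * P i ^ 2)
             (fun i => xi alpha (upd X j q) i ^ 2 * P i ^ 2))
    by (intros i Hi; rewrite Hxi by lia; reflexivity).
  rewrite <- Ham_split_at by lia. field.
Qed.

Lemma Ham_upd_x_last n alpha X P q : Ham n alpha (upd X (n + 1) q) P = Ham n alpha X P.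
Proof.
  unfold Ham. f_equal. apply sum_upto_ext. intros i Hi.
  rewrite (xi_ext alpha (upd X (n + 1) q) X) by (intros; apply upd_neq; lia).
  reflexivity.
Qed.

Lemma Derive_Ham_p n alpha X P j q0 : (1 <= j <= n + 1)%nat ->
  Derive (fun q => Ham n alpha X (upd P j q)) q0 = xi alpha X j ^ 2 * q0.
Proof.
  intros Hj. rewrite (Derive_ext _ _ _ (fun q => Ham_upd_p n alpha X P j q Hj)).
  apply is_derive_unique. auto_derive; [exact I | field].
Qed.

Lemma Derive_Ham_x n alpha X P j q0 : (1 <= j <= n)%nat ->
  Derive (fun q => Ham n alpha (upd X j q) P) q0
  = / 2 * xi alpha X j ^ 2 * Rsq n alpha X P (n - j)
    * (INR (2 * alpha j) * q0 ^ pred (2 * alpha j)).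
Proof.
  intros Hj. rewrite (Derive_ext _ _ _ (fun q => Ham_upd_x n alpha X P j q Hj)).
  apply is_derive_unique. auto_derive; [exact I|].
  replace (alpha j + (alpha j + 0))%nat with (2 * alpha j)%nat by lia. ring.
Qed.

Lemma Derive_Ham_x_last n alpha X P q0 :
  Derive (fun q => Ham n alpha (upd X (n + 1) q) P) q0 = 0.
Proof. rewrite (Derive_ext _ _ _ (Ham_upd_x_last n alpha X P)). apply Derive_const. Qed.

(* One degree of freedom with Hamiltonian [w/2 (c u^m + v^2)]. *)
Lemma is_derive_energy_zero (u v : R -> R) (c w s : R) (m : nat) :
  is_derive u s (w * v s) ->
  is_derive v s (- (/ 2 * w * c * (INR m * u s ^ pred m))) ->
  is_derive (fun t => c * u t ^ m + v t ^ 2) s 0.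
Proof.
  intros Hu Hv.
  replace 0 with (c * (INR m * (w * v s) * u s ^ pred m)
                  + INR 2 * - (/ 2 * w * c * (INR m * u s ^ pred m)) * v s ^ pred 2)
    by (simpl; field).
  apply (is_derive_plus (fun t => c * u t ^ m) (fun t => v t ^ 2)).
  - apply (is_derive_scal (fun t => u t ^ m)). now apply is_derive_pow.
  - now apply is_derive_pow.
Qed.

Lemma is_derive_zero_const_on (f : R -> R) (a b : R) :
  (forall s, a < s < b -> is_derive f s 0) ->
  forall s t, a < s < b -> a < t < b -> f s = f t.
Proof.
  intros Hd s t Hs Ht.
  destruct (Rtotal_order s t) as [Hst | [-> | Hts]]; [| reflexivity |].
  - apply eq_is_derive; [intros r Hr; apply Hd; lra | exact Hst].
  - symmetry. apply eq_is_derive; [intros r Hr; apply Hd; lra | exact Hts].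
Qed.

Lemma Rsq_const n alpha a b x p : a < 0 < b ->
  is_hamilton_solution n alpha a b x p ->
  forall k, (k <= n)%nat -> forall t, a < t < b ->
  Rsq n alpha (x t) (p t) k = Rsq n alpha (x 0) (p 0) k.
Proof.
  intros Hab Hsol k. induction k as [|k IH]; intros Hk t Ht; cbn [Rsq].
  - f_equal. apply (is_derive_zero_const_on (fun s => p s (n + 1)%nat) a b); auto.
    intros s Hs. destruct (Hsol s Hs (n + 1)%nat ltac:(lia)) as [_ Hp].
    rewrite Derive_Ham_x_last, Ropp_0 in Hp. exact Hp.
  - set (j := (n - k)%nat). rewrite (IH ltac:(lia) t Ht).
    apply (is_derive_zero_const_on
             (fun s => Rsq n alpha (x 0) (p 0) k * x s j ^ (2 * alpha j) + p s j ^ 2) a b);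
      auto.
    intros s Hs. destruct (Hsol s Hs j ltac:(lia)) as [Hx Hp].
    rewrite Derive_Ham_p in Hx by lia.
    rewrite Derive_Ham_x in Hp by lia.
    replace (n - j)%nat with k in Hp by lia.
    rewrite (IH ltac:(lia) s Hs) in Hp.
    exact (is_derive_energy_zero _ _ _ _ _ _ Hx Hp).
Qed.

Theorem mainTheorem7 (n : nat) (alpha : nat -> nat) (a b : R)
  (x p : R -> nat -> R) (x0 p0 : nat -> R) :
  (1 <= n)%nat ->
  a < 0 < b ->
  is_hamilton_solution n alpha a b x p ->
  (forall j, (1 <= j <= n + 1)%nat -> x 0 j = x0 j /\ p 0 j = p0 j) ->
  (forall j t, (1 <= j <= n + 1)%nat -> a < t < b ->
     (Rj n alpha x p j t) ^ 2 = (Rj n alpha x p j 0) ^ 2) /\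
  (forall t, a < t < b -> (Rj n alpha x p (n + 1) t) ^ 2 = (p0 (n + 1)%nat) ^ 2) /\
  (forall j t, (1 <= j <= n)%nat -> a < t < b ->
     (Rj n alpha x p j t) ^ 2
       = (Rj n alpha x p (j + 1) t) ^ 2 * (x0 j) ^ (2 * alpha j) + (p0 j) ^ 2).
Proof.
  intros _ Hab Hsol Hinit. unfold Rj.
  assert (Hconst : forall k t, (k <= n)%nat -> a < t < b ->
            Rk n alpha x p k t ^ 2 = Rsq n alpha (x 0) (p 0) k).
  { intros k t Hk Ht. rewrite Rk_sqr. exact (Rsq_const n alpha a b x p Hab Hsol k Hk t Ht). }
  split; [|split].
  - intros j t Hj Ht. rewrite !Hconst by (lra || lia). reflexivity.
  - intros t Ht. rewrite Nat.sub_diag, Hconst by (lra || lia). cbn [Rsq].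
    now rewrite (proj2 (Hinit (n + 1)%nat ltac:(lia))).
  - intros j t Hj Ht.
    replace (n + 1 - j)%nat with (S (n - j)) by lia.
    replace (n + 1 - (j + 1))%nat with (n - j)%nat by lia.
    rewrite !Hconst by (lra || lia). cbn [Rsq].
    replace (n - (n - j))%nat with j by lia.
    now destruct (Hinit j ltac:(lia)) as [-> ->].
Qed.
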